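(* Let $d\ge3$ and $\overrightarrow{w}\in(0,\infty)^d$. Suppose there is a partition of $\{1,\dots,d\}$ into pairwise disjoint nonempty sets $A,B,C$ such that, with $a=\sum_{i\in A}w_i$, $b=\sum_{i\in B}w_i$, $c=\sum_{i\in C}w_i$, one has $a+b+c\ge 2\max\{a,b,c\}$. Then there exists a random vector $\overrightarrow{U}=(U_1,\dots,U_d)$ with each $U_i$ uniform on $[0,1]$ such that $\sum_{i=1}^d w_iU_i=\frac12\sum_{i=1}^dw_i$ almost surely. *)

From Stdlib Require Import Reals.
Open Scope R_scope.

Fixpoint fsum (n : nat) (f : nat -> R) : R :=
  match n with
  | O => 0
  | S m => fsum m f + f m
  end.

Record ProbSpace := {
  Omega : Type;
  F : (Omega -> Prop) -> Prop;
  P : (Omega -> Prop) -> R;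
  F_full : F (fun _ => True);
  F_compl : forall E, F E -> F (fun x => ~ E x);
  F_cunion : forall E : nat -> Omega -> Prop,
      (forall n, F (E n)) -> F (fun x => exists n, E n x);
  P_nonneg : forall E, F E -> 0 <= P E;
  P_full : P (fun _ => True) = 1;
  P_sigma_add : forall E : nat -> Omega -> Prop,
      (forall n, F (E n)) ->
      (forall n m x, n <> m -> E n x -> E m x -> False) ->
      infinite_sum (fun n => P (E n)) (P (fun x => exists n, E n x))
}.

Definition random_variable (S : ProbSpace) (X : Omega S -> R) : Prop :=
  forall t : R, F S (fun x => X x <= t).

(* X is uniformly distributed on [0,1]: P(X <= t) = t for all t in [0,1]
   (together with P(X <= 0) = 0 and P(X <= 1) = 1 this determines the law). *)
Definition uniform01 (S : ProbSpace) (X : Omega S -> R) : Prop :=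
  random_variable S X /\
  (forall t : R, 0 <= t <= 1 -> P S (fun x => X x <= t) = t).

Definition block_weight (d : nat) (w : nat -> R) (A : nat -> bool) : R :=
  fsum d (fun i => if A i then w i else 0).

(* Let x = (b + c - a)/2, y = (a + c - b)/2, z = (a + b - c)/2, so that
   a = y + z, b = x + z, c = x + y, and the hypothesis says x, y, z >= 0.  All
   indices of a block receive the same variable, so it suffices to find uniform
   V_A, V_B, V_C with a V_A + b V_B + c V_C = (a + b + c)/2.  If, say, x = 0,
   take U, 1 - U, 1 - U.  Otherwise cut the circle [0, 1) into consecutive arcs of
   lengths p, q, r proportional to 1/x, 1/z, 1/y and let V_A, V_B, V_C be tent
   maps of the circle that rise along one arc and fall along the other two.  A
   tent map sends Lebesgue measure to itself, and on each arc the weighted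
   slopes cancel: on the first arc, for instance,
   (y + z)/p = (x + z)/(p + q) + (x + y)/(p + r) since 1/p : 1/q : 1/r = x : z : y.
   Hence the weighted sum is constant, and equal to its mean (a + b + c)/2. *)

From Stdlib Require Import Reals Lra Lia.
From mathcomp Require Import ssreflect ssrbool.
From mathcomp Require all_boot all_algebra all_classical all_reals all_analysis.
From mathcomp Require Rstruct Rstruct_topology.

(* The unit interval with Lebesgue measure, on the sample space [R]: only the
   trace of a set on [[0, 1]] matters. *)
Module LebesgueUnitInterval.
Import all_boot all_algebra all_classical all_reals all_analysis.
Import Rstruct Rstruct_topology.
Import order.Order.TTheory GRing.Theory Num.Theory.
Local Open Scope classical_set_scope.

Definition unit_interval : set R := fun u => (0 <= u <= 1)%coqR.

Definition event (E : R -> Prop) : Prop :=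
  measurable (E `&` unit_interval : set (measurableTypeR R)).

Definition prob (E : R -> Prop) : R :=
  fine (lebesgue_measure (E `&` unit_interval)).

Lemma set_itv_cc (l r : R) : (fun u => (l <= u <= r)%coqR) = [set` `[l, r]%R].
Proof.
apply/funext => u; apply/propext; rewrite /= in_itv /=.
by split=> [[/RleP -> /RleP ->] | /andP[/RleP ? /RleP ?]].
Qed.

Lemma set_itv_oo (l r : R) : (fun u => (l < u < r)%coqR) = [set` `]l, r[%R].
Proof.
apply/funext => u; apply/propext; rewrite /= in_itv /=.
by split=> [[/RltP -> /RltP ->] | /andP[/RltP ? /RltP ?]].
Qed.

Lemma measurable_unit_interval : measurable (unit_interval : set (measurableTypeR R)).
Proof. rewrite /unit_interval set_itv_cc; exact: measurable_itv. Qed.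

Lemma lebesgue_itv_cc (l r : R) : (l <= r)%coqR ->
  lebesgue_measure (fun u => (l <= u <= r)%coqR) = (r - l)%:E.
Proof.
move=> lr; rewrite set_itv_cc lebesgue_measure_itv /=.
case: ifP => // /negbT; rewrite lte_fin -leNgt => /RleP rl.
have -> : r = l by lra.
by rewrite subrr.
Qed.

Lemma lebesgue_itv_oo (l r : R) : (l <= r)%coqR ->
  lebesgue_measure (fun u => (l < u < r)%coqR) = (r - l)%:E.
Proof.
move=> lr; rewrite set_itv_oo lebesgue_measure_itv /=.
case: ifP => // /negbT; rewrite lte_fin -leNgt => /RleP rl.
have -> : r = l by lra.
by rewrite subrr.
Qed.

Lemma lebesgue_unit_interval : lebesgue_measure unit_interval = 1%:E.
Proof. by rewrite /unit_interval lebesgue_itv_cc ?subr0 //; lra. Qed.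

Lemma lebesgue_sub_unit_interval_fin_num (A : set (measurableTypeR R)) :
  measurable A -> A `<=` unit_interval -> lebesgue_measure A \is a fin_num.
Proof.
move=> mA sA; rewrite ge0_fin_numE; last exact: measure_ge0.
apply: (le_lt_trans (le_measure _ _ _ sA)); rewrite ?inE //.
  exact: measurable_unit_interval.
by change (lebesgue_measure unit_interval < +oo)%E; rewrite lebesgue_unit_interval ltry.
Qed.

Lemma setI_unit_interval_sure (E : R -> Prop) :
  (forall u, (0 <= u <= 1)%coqR -> E u) -> E `&` unit_interval = unit_interval.
Proof.
move=> sure; apply/seteqP; split=> [u [] // | u u01].
by split=> //; apply: sure.
Qed.

Lemma event_sure (E : R -> Prop) :
  (forall u, (0 <= u <= 1)%coqR -> E u) -> event E /\ prob E = 1%coqR.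
Proof.
move=> /setI_unit_interval_sure sure; rewrite /event /prob sure.
by rewrite lebesgue_unit_interval; split; first exact: measurable_unit_interval.
Qed.

Lemma event_null (E : R -> Prop) :
  (forall u, (0 <= u <= 1)%coqR -> ~ E u) -> event E.
Proof.
move=> null; rewrite /event.
have -> : E `&` unit_interval = set0.
  by apply/seteqP; split=> // u [Eu u01]; exact: null u u01 Eu.
exact: measurable0.
Qed.

Lemma event_compl (E : R -> Prop) : event E -> event (fun x => ~ E x).
Proof.
rewrite /event => mE.
have -> : (fun x => ~ E x) `&` unit_interval = unit_interval `\` (E `&` unit_interval).
  apply/seteqP; split=> u; first by move=> [nEu u01]; split=> // [[]].
  by move=> [u01 nEIu]; split=> // Eu; exact: nEIu.
exact: measurableD measurable_unit_interval mE.
Qed.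

Lemma setI_unit_interval_bigcup (E : nat -> R -> Prop) :
  (fun x => exists n, E n x) `&` unit_interval = \bigcup_n (E n `&` unit_interval).
Proof.
apply/seteqP; split=> u; first by move=> [[n En] u01]; exists n.
by move=> [n _ [En u01]]; split=> //; exists n.
Qed.

Lemma event_bigcup (E : nat -> R -> Prop) :
  (forall n, event (E n)) -> event (fun x => exists n, E n x).
Proof.
by rewrite /event setI_unit_interval_bigcup => mE; exact: bigcupT_measurable.
Qed.

Lemma prob_ge0 (E : R -> Prop) : (0 <= prob E)%coqR.
Proof. by apply/RleP; apply: fine_ge0; exact: measure_ge0. Qed.

Lemma sum_f_R0_big (f : nat -> R) n : sum_f_R0 f n = (\sum_(0 <= k < n.+1) f k)%R.
Proof.
elim: n => [|n IH] /=; first by rewrite big_nat1.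
by rewrite IH RplusE (big_nat_recr n.+1).
Qed.

Lemma prob_sigma_additive (E : nat -> R -> Prop) : (forall n, event (E n)) ->
  (forall n m x, n <> m -> E n x -> E m x -> False) ->
  infinite_sum (fun n => prob (E n)) (prob (fun x => exists n, E n x)).
Proof.
move=> mE disjE; pose G n := E n `&` unit_interval.
have mG n : measurable (G n : set (measurableTypeR R)) by exact: mE.
have trivG : trivIset setT G.
  move=> i j _ _ [x [[Ei _] [Ej _]]].
  by case: (eqVneq i j) => // /eqP ij; case: (disjE i j x ij Ei Ej).
have finG i : lebesgue_measure (G i) \is a fin_num.
  by apply: lebesgue_sub_unit_interval_fin_num => // x [].
have finU : lebesgue_measure (\bigcup_n G n) \is a fin_num.
  apply: lebesgue_sub_unit_interval_fin_num; first exact: bigcupT_measurable.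
  by move=> x [n _ [_ u01]].
have cvgE : (fun n => \sum_(0 <= i < n) lebesgue_measure (G i))%R @ \oo -->
    (fine (lebesgue_measure (\bigcup_n G n)))%:E.
  by rewrite fineK //; exact: measure_sigma_additive.
move=> eps /RltP eps0; rewrite /prob setI_unit_interval_bigcup.
have [N _ HN] := (cvgrPdist_lt _ _).1 (fine_cvg cvgE) eps eps0.
exists N => n nN; rewrite RdistE sum_f_R0_big distrC.
have /= := HN n.+1 ltac:(apply/ssrnat.leP; lia).
by rewrite sum_fine => [/RltP | i _] //; exact: finG.
Qed.

Definition space : ProbSpace := {|
  Omega := R; F := event; P := prob;
  F_full := proj1 (event_sure _ (fun _ _ => I));
  F_compl := event_compl; F_cunion := event_bigcup;
  P_nonneg := fun E _ => prob_ge0 E;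
  P_full := proj2 (event_sure _ (fun _ _ => I));
  P_sigma_add := prob_sigma_additive |}.

Lemma prob_itv (E : R -> Prop) (l r : R) : (0 <= l <= r /\ r <= 1)%coqR ->
  (forall u, (0 <= u <= 1)%coqR -> (E u <-> (l <= u <= r)%coqR)) ->
  event E /\ prob E = (r - l)%coqR.
Proof.
move=> lr EE; rewrite /event /prob.
have -> : E `&` unit_interval = (fun u => (l <= u <= r)%coqR).
  apply/seteqP; split=> u; first by move=> [Eu u01]; apply/EE.
  move=> ulr; have u01 : (0 <= u <= 1)%coqR by lra.
  by split=> //; apply/EE.
split; first by rewrite set_itv_cc; exact: measurable_itv.
by rewrite lebesgue_itv_cc /= ?RminusE //; lra.
Qed.

Lemma prob_compl_itv (E : R -> Prop) (l r : R) : (0 <= l <= r /\ r <= 1)%coqR ->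
  (forall u, (0 <= u <= 1)%coqR -> (E u <-> ~ (l < u < r)%coqR)) ->
  event E /\ prob E = (1 - (r - l))%coqR.
Proof.
move=> lr EE; set O := fun u => (l < u < r)%coqR.
have mO : measurable (O : set (measurableTypeR R)).
  by rewrite /O set_itv_oo; exact: measurable_itv.
rewrite /event /prob.
have -> : E `&` unit_interval = unit_interval `\` O.
  by apply/seteqP; split=> u [Eu u01]; split=> //; apply/EE.
split; first exact: measurableD measurable_unit_interval mO.
rewrite measureD //; first last.
- by change (lebesgue_measure unit_interval < +oo)%E; rewrite lebesgue_unit_interval ltry.
- exact: measurable_unit_interval.
rewrite setIidr => [|u]; last by rewrite /O /unit_interval; lra.
change (fine (lebesgue_measure unit_interval - lebesgue_measure O)%E = (1 - (r - l))%coqR).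
by rewrite lebesgue_unit_interval lebesgue_itv_oo -?EFinB /= ?RminusE //; lra.
Qed.

End LebesgueUnitInterval.

Import LebesgueUnitInterval.
Open Scope R_scope.

Lemma Rdiv_le_iff (a k t : R) : 0 < k -> (a / k <= t <-> a <= t * k).
Proof.
move=> k0; have ak : a / k * k = a by field; lra.
split=> H; first by rewrite -ak; apply: Rmult_le_compat_r; lra.
by apply: (Rmult_le_reg_r k); rewrite ?ak.
Qed.

Lemma Rle_div_iff (t a k : R) : 0 < k -> (t <= a / k <-> t * k <= a).
Proof.
move=> k0; have ak : a / k * k = a by field; lra.
split=> H; first by rewrite -ak; apply: Rmult_le_compat_r; lra.
by apply: (Rmult_le_reg_r k); rewrite ?ak.
Qed.

Lemma uniform01_of_sublevels (V : R -> R) :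
  (forall u, 0 <= u <= 1 -> 0 <= V u <= 1) ->
  (forall t, 0 <= t <= 1 -> event (fun u => V u <= t) /\ prob (fun u => V u <= t) = t) ->
  uniform01 space V.
Proof.
move=> V01 sublevel; split; last by move=> t t01; case: (sublevel t t01).
move=> t /=; case: (Rlt_le_dec t 0) => [t0 | t0].
  by apply: event_null => u u01 Vu; have := V01 u u01; lra.
case: (Rle_lt_dec t 1) => [t1 | t1]; first by case: (sublevel t (conj t0 t1)).
by case: (event_sure (fun u => V u <= t)) => // u u01; have := V01 u u01; lra.
Qed.

Lemma uniform01_id : uniform01 space (fun u => u).
Proof.
apply: uniform01_of_sublevels => [u | t t01]; first lra.
have [Et Pt] := prob_itv (fun u => u <= t) 0 t ltac:(lra) ltac:(move=> u; lra).
by rewrite Pt Rminus_0_r.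
Qed.

Lemma uniform01_flip : uniform01 space (fun u => 1 - u).
Proof.
apply: uniform01_of_sublevels => [u | t t01]; first lra.
have [Et Pt] := prob_itv (fun u => 1 - u <= t) (1 - t) 1 ltac:(lra) ltac:(move=> u; lra).
by split=> //; rewrite Pt; ring.
Qed.

(* The tent map with peak at [s], precomposed with the rotation [u |-> u - c]
   of the circle [R/Z], both seen on [[0, 1]]. *)
Definition rotated_tent (c s u : R) : R :=
  if Rle_dec u c then (c - u) / (1 - s)
  else if Rle_dec u (c + s) then (u - c) / s
  else 1 + (c + s - u) / (1 - s).

Section RotatedTent.
Variables c s : R.
Hypotheses (c0 : 0 <= c) (s01 : 0 < s < 1) (cs1 : c + s <= 1).

Lemma rotated_tent_le_iff (u t : R) :
  rotated_tent c s u <= t <->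
  (u <= c /\ c - (1 - s) * t <= u) \/
  (c < u <= c + s /\ u <= c + s * t) \/
  (c + s < u /\ c + s + (1 - s) * (1 - t) <= u).
Proof.
rewrite /rotated_tent; case: Rle_dec => uc /=.
  by rewrite Rdiv_le_iff; lra.
case: Rle_dec => ucs /=; first by rewrite Rdiv_le_iff; lra.
have -> : 1 + (c + s - u) / (1 - s) <= t <-> (c + s - u) / (1 - s) <= t - 1 by lra.
by rewrite Rdiv_le_iff; lra.
Qed.

Lemma rotated_tent_ge0 (u : R) : 0 <= u <= 1 -> 0 <= rotated_tent c s u.
Proof.
move=> u01; rewrite /rotated_tent; case: Rle_dec => uc /=.
  by rewrite Rle_div_iff; lra.
case: Rle_dec => ucs /=; first by rewrite Rle_div_iff; lra.
have : - 1 <= (c + s - u) / (1 - s) by rewrite Rle_div_iff; lra.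
lra.
Qed.

Lemma uniform01_rotated_tent : uniform01 space (rotated_tent c s).
Proof.
apply: uniform01_of_sublevels => [u u01 | t t01].
  split; first exact: rotated_tent_ge0.
  by apply/rotated_tent_le_iff; lra.
have st : 0 <= s * t <= s by nra.
have s't : 0 <= (1 - s) * t <= 1 - s by nra.
case: (Rlt_le_dec ((1 - s) * t) c) => [tc | ct].
- have [E Pt] := prob_itv (fun u => rotated_tent c s u <= t)
    (c - (1 - s) * t) (c + s * t) ltac:(lra)
    ltac:(move=> u u01 /=; rewrite rotated_tent_le_iff; nra).
  by split=> //; rewrite Pt; ring.
- have [E Pt] := prob_compl_itv (fun u => rotated_tent c s u <= t)
    (c + s * t) (c + s + (1 - s) * (1 - t)) ltac:(nra)
    ltac:(move=> u u01 /=; rewrite rotated_tent_le_iff; nra).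
  by split=> //; rewrite Pt; ring.
Qed.

End RotatedTent.

Lemma rotated_tents_balance (p q r u : R) :
  0 < p -> 0 < q -> 0 < r -> p + q + r = 1 -> 0 <= u <= 1 ->
  (/ q + / r) * rotated_tent 0 p u + (/ p + / q) * rotated_tent (p + q) r u +
  (/ p + / r) * rotated_tent p q u = / p + / q + / r.
Proof.
move=> p0 q0 r0 pqr u01; rewrite /rotated_tent Rplus_0_l pqr.
have r_def : r = 1 - p - q by lra.
subst r; case: (Rle_dec u 0); case: (Rle_dec u p); case: (Rle_dec u (p + q));
  case: (Rle_dec u 1) => /= *; try (exfalso; lra);
  (* at [u = 0], [rotated_tent 0 p] takes its first branch *)
  try (assert (u = 0) as -> by lra); field; lra.
Qed.

Definition balanceable (a b c : R) : Prop :=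
  exists VA VB VC : R -> R,
    [/\ uniform01 space VA, uniform01 space VB, uniform01 space VC &
        forall u, 0 <= u <= 1 -> a * VA u + b * VB u + c * VC u = / 2 * (a + b + c)].

Lemma balanceable_swap12 (a b c : R) : balanceable a b c -> balanceable b a c.
Proof.
move=> [VA [VB [VC [uA uB uC bal]]]]; exists VB, VA, VC; split=> // u u01.
by have := bal u u01; lra.
Qed.

Lemma balanceable_swap23 (a b c : R) : balanceable a b c -> balanceable a c b.
Proof.
move=> [VA [VB [VC [uA uB uC bal]]]]; exists VA, VC, VB; split=> // u u01.
by have := bal u u01; lra.
Qed.

Lemma balanceable_sum (b c : R) : balanceable (b + c) b c.
Proof.
exists (fun u => u), (fun u => 1 - u), (fun u => 1 - u).
by split=> [||| u _]; [exact: uniform01_id | exact: uniform01_flip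
  | exact: uniform01_flip | field].
Qed.

Lemma balanceable_halves (x y z : R) : 0 < x -> 0 < y -> 0 < z ->
  balanceable (y + z) (x + z) (x + y).
Proof.
move=> x0 y0 z0; set S := / x + / y + / z.
have S0 : 0 < S by rewrite /S; have := Rinv_0_lt_compat x; have := Rinv_0_lt_compat y;
  have := Rinv_0_lt_compat z; lra.
set p := / (x * S); set q := / (z * S); set r := / (y * S).
have p0 : 0 < p by apply/Rinv_0_lt_compat/Rmult_lt_0_compat.
have q0 : 0 < q by apply/Rinv_0_lt_compat/Rmult_lt_0_compat.
have r0 : 0 < r by apply/Rinv_0_lt_compat/Rmult_lt_0_compat.
have pqr : p + q + r = 1.
  rewrite /p /q /r !Rinv_mult; transitivity (S * / S); first by rewrite /S; ring.
  by field; lra.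
exists (rotated_tent 0 p), (rotated_tent (p + q) r), (rotated_tent p q).
split=> [||| u u01]; try apply: uniform01_rotated_tent; try lra.
have := rotated_tents_balance p q r u p0 q0 r0 pqr u01.
have -> : / p = x * S by rewrite /p Rinv_inv.
have -> : / q = z * S by rewrite /q Rinv_inv.
have -> : / r = y * S by rewrite /r Rinv_inv.
set VA := rotated_tent 0 p u; set VB := rotated_tent (p + q) r u; set VC := rotated_tent p q u.
move=> bal; apply: (Rmult_eq_reg_l S); last lra.
transitivity ((z * S + y * S) * VA + (x * S + z * S) * VB + (x * S + y * S) * VC).
  by ring.
by rewrite bal; field.
Qed.

Lemma balanceable_of_polygon (a b c : R) :
  a + b + c >= 2 * Rmax a (Rmax b c) -> balanceable a b c.
Proof.
move=> polygon.
have := Rmax_l a (Rmax b c); have := Rmax_r a (Rmax b c).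
have := Rmax_l b c; have := Rmax_r b c; move=> *.
case: (Req_dec a (b + c)) => [-> | ab]; first exact: balanceable_sum.
case: (Req_dec b (a + c)) => [-> | ba].
  by apply: balanceable_swap12; exact: balanceable_sum.
case: (Req_dec c (a + b)) => [-> | ca].
  by apply/balanceable_swap23/balanceable_swap12; exact: balanceable_sum.
have := balanceable_halves ((b + c - a) / 2) ((a + c - b) / 2) ((a + b - c) / 2).
have -> : (a + c - b) / 2 + (a + b - c) / 2 = a by field.
have -> : (b + c - a) / 2 + (a + b - c) / 2 = b by field.
have -> : (b + c - a) / 2 + (a + c - b) / 2 = c by field.
by apply; lra.
Qed.

Lemma fsum_ext (n : nat) (f g : nat -> R) :
  (forall i, (i < n)%nat -> f i = g i) -> fsum n f = fsum n g.
Proof.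
elim: n => [|n IH] fg //=.
by rewrite IH => [|i ?]; rewrite fg //; lia.
Qed.

Section Blocks.
Variables (d : nat) (w : nat -> R) (A B C : nat -> bool).
Hypothesis blocks : forall i, (i < d)%nat ->
  (A i = true /\ B i = false /\ C i = false) \/
  (A i = false /\ B i = true /\ C i = false) \/
  (A i = false /\ B i = false /\ C i = true).

Lemma fsum_blockwise (al be ga : R) :
  fsum d (fun i => w i * (if A i then al else if B i then be else ga)) =
  block_weight d w A * al + block_weight d w B * be + block_weight d w C * ga.
Proof.
rewrite /block_weight; elim: d blocks => [|n IH] blocks_n /=; first ring.
rewrite IH => [|i ?]; last by apply: blocks_n; lia.
by case: (blocks_n n ltac:(lia)) => [[-> [-> ->]] | [[-> [-> ->]] | [-> [-> ->]]]]; ring.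
Qed.

Lemma fsum_blocks : fsum d w = block_weight d w A + block_weight d w B + block_weight d w C.
Proof.
have := fsum_blockwise 1 1 1; rewrite !Rmult_1_r => <-.
by apply: fsum_ext => i _; case: (A i); case: (B i); ring.
Qed.

End Blocks.

Theorem mainTheorem6 (d : nat) (w : nat -> R) (A B C : nat -> bool) :
  (3 <= d)%nat ->
  (forall i, (i < d)%nat -> 0 < w i) ->
  (* A, B, C partition {0,...,d-1}: each index lies in exactly one block *)
  (forall i, (i < d)%nat ->
     (A i = true /\ B i = false /\ C i = false) \/
     (A i = false /\ B i = true /\ C i = false) \/
     (A i = false /\ B i = false /\ C i = true)) ->
  (exists i, (i < d)%nat /\ A i = true) ->
  (exists i, (i < d)%nat /\ B i = true) ->
  (exists i, (i < d)%nat /\ C i = true) ->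
  block_weight d w A + block_weight d w B + block_weight d w C >=
    2 * Rmax (block_weight d w A) (Rmax (block_weight d w B) (block_weight d w C)) ->
  exists (S : ProbSpace) (U : nat -> Omega S -> R),
    (forall i, (i < d)%nat -> uniform01 S (U i)) /\
    F S (fun x => fsum d (fun i => w i * U i x) = / 2 * fsum d w) /\
    P S (fun x => fsum d (fun i => w i * U i x) = / 2 * fsum d w) = 1.
Proof.
move=> _ _ blocks _ _ _ /balanceable_of_polygon [VA [VB [VC [uA uB uC bal]]]].
exists space, (fun i u => if A i then VA u else if B i then VB u else VC u); split.
  move=> i /blocks [[-> _] | [[-> [-> _]] | [-> [-> _]]]] //.
apply: event_sure => u u01.
by rewrite (fsum_blockwise _ _ _ _ _ blocks) (fsum_blocks _ _ _ _ _ blocks); exact: bal.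
Qed.
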